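(* Let $H_n = \sum_{j=1}^n \frac{1}{j}$ denote the $n$th harmonic number and $\zeta$ the Riemann zeta function. Then $$\sum_{n = 1}^\infty H_{2n}\left(\zeta(2) - 1 - \frac{1}{2^2} - \ldots - \frac{1}{n^2} - \frac{1}{n} \right) = \log(2) - \frac{7}{8}\zeta(3) - 1.$$ *)

From Stdlib Require Import Reals.
From Coquelicot Require Import Coquelicot.
Open Scope R_scope.

Definition harmonic (n : nat) : R :=
  sum_n_m (fun j : nat => / INR j) 1 n.

Definition zeta (s : nat) : R :=
  Series (fun k : nat => / (INR (k + 1)) ^ s).

Definition psum2 (n : nat) : R :=
  sum_n_m (fun j : nat => / (INR j) ^ 2) 1 n.

(* Let r_n = zeta(2) - (1 + 1/2^2 + ... + 1/n^2) - 1/n and E_n = H_2 + H_4 + ... + H_2n.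
   Since r_(k+1) - r_k = 1/(k (k+1)^2), summation by parts turns the N-th partial sum
   into E_N r_N - sum_(k<N) E_k / (k (k+1)^2).  The boundary term vanishes in the limit,
   because -1/(n (n+1)) <= r_n <= 0 and E_n <= n H_2n.  With the closed form of E_n the
   remaining sum telescopes, up to terms tending to 0, to
   1 - (H_2N - H_N) + (1/2) sum_(y<=N+1) O_y / y^2,  where O_y = 1 + 1/3 + ... + 1/(2y-1).
   The last sum tends to 7/4 zeta(3): splitting Euler's sum sum_s H_(s-1)/s^2 = zeta(3) by
   the parity of s relates the two, and both are evaluated by adding up
   1/(t_y x_i x_(i+y)) over the triangle i, y >= 1, i + y <= N once by rows and once by
   diagonals, with x_i = t_i = i, resp. x_i = 2i - 1 and t_y = 2y.  The two orders differ
   by a sum sum_a (g_N - g_(N-a)) / a^2 that tends to 0. *)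

From Stdlib Require Import Reals Lra Lia.
From Coquelicot Require Import Coquelicot.
Open Scope R_scope.

(* Typed in [R] rather than in Coquelicot's [AbelianMonoid.sort], so that [ring]
   and [field] accept its values as real atoms. *)
Definition sum1 (f : nat -> R) (n : nat) : R := sum_n_m f 1 n.

Lemma sum1_O (f : nat -> R) : sum1 f 0 = 0.
Proof. exact (sum_n_m_zero f 1 0 Nat.lt_0_1). Qed.

Lemma sum1_S (f : nat -> R) n : sum1 f (S n) = sum1 f n + f (S n).
Proof. exact (sum_n_Sm f 1 n (le_n_S 0 n (Nat.le_0_l n))). Qed.

Lemma sum1_ext (f g : nat -> R) n :
  (forall k, (1 <= k <= n)%nat -> f k = g k) -> sum1 f n = sum1 g n.
Proof. exact (sum_n_m_ext_loc f g 1 n). Qed.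

Lemma sum1_add (f g : nat -> R) n : sum1 (fun k => f k + g k) n = sum1 f n + sum1 g n.
Proof. exact (sum_n_m_plus f g 1 n). Qed.

Lemma sum1_scal (c : R) (f : nat -> R) n : sum1 (fun k => c * f k) n = c * sum1 f n.
Proof. exact (sum_n_m_mult_l c f 1 n). Qed.

Lemma sum1_sub (f g : nat -> R) n : sum1 (fun k => f k - g k) n = sum1 f n - sum1 g n.
Proof.
  rewrite <- (sum1_ext (fun k => (f k - g k) + g k) f) by (intros; ring).
  rewrite sum1_add; ring.
Qed.

Lemma sum1_le (f g : nat -> R) n :
  (forall k, (1 <= k <= n)%nat -> f k <= g k) -> sum1 f n <= sum1 g n.
Proof.
  induction n as [|n IH]; intros Hfg.
  - rewrite !sum1_O; lra.
  - rewrite !sum1_S.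
    apply Rplus_le_compat; [apply IH; intros; apply Hfg|apply Hfg]; lia.
Qed.

Lemma sum1_reflect (f : nat -> R) n : sum1 (fun k => f (S n - k)%nat) n = sum1 f n.
Proof.
  revert f; induction n as [|n IH]; intros f; [reflexivity|].
  unfold sum1; rewrite (sum_Sn_m _ 1), <- sum_n_m_S by lia.
  change (plus ?a ?b) with (a + b).
  fold (sum1 f (S n)) (sum1 (fun k => f (S (S n) - S k)%nat) n).
  rewrite sum1_S, <- (IH f).
  replace (S (S n) - 1)%nat with (S n) by lia; simpl; ring.
Qed.

Lemma sum1_shift (f : nat -> R) a M :
  sum1 (fun i => f (i + a)%nat) M = sum1 f (M + a) - sum1 f a.
Proof.
  induction M as [|M IH].
  - rewrite sum1_O; simpl; ring.
  - rewrite Nat.add_succ_l, !sum1_S, IH, Nat.add_succ_l; ring.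
Qed.

Lemma sum1_triangle (g : nat -> nat -> R) N :
  sum1 (fun s => sum1 (fun y => g y (s - y)%nat) (s - 1)) N
  = sum1 (fun y => sum1 (fun i => g y i) (N - y)) N.
Proof.
  induction N as [|N IH]; [rewrite !sum1_O; reflexivity|].
  rewrite !sum1_S, IH, Nat.sub_diag, sum1_O, Rplus_0_r.
  replace (S N - 1)%nat with N by lia.
  rewrite <- sum1_add; apply sum1_ext; intros y Hy.
  replace (S N - y)%nat with (S (N - y)) by lia; symmetry; apply sum1_S.
Qed.

Lemma sum1_double (f : nat -> R) N :
  sum1 f (2 * N) = sum1 (fun m => f (2 * m - 1)%nat) N + sum1 (fun m => f (2 * m)%nat) N.
Proof.
  induction N as [|N IH]; [rewrite !sum1_O; simpl; ring|].
  replace (2 * S N)%nat with (S (S (2 * N))) by lia.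
  rewrite !sum1_S, IH.
  replace (2 * S N - 1)%nat with (S (2 * N)) by lia.
  replace (2 * S N)%nat with (S (S (2 * N))) by lia; ring.
Qed.

Lemma sum1_by_parts (a b : nat -> R) n :
  sum1 (fun k => a k * b k) (S n)
  = sum1 a (S n) * b (S n) - sum1 (fun k => sum1 a k * (b (S k) - b k)) n.
Proof.
  induction n as [|n IH].
  - rewrite !sum1_S, !sum1_O; ring.
  - rewrite (sum1_S (fun k => a k * b k)), IH, (sum1_S a (S n)).
    rewrite (sum1_S (fun k => sum1 a k * (b (S k) - b k))); ring.
Qed.

Lemma sum_n_succ (a : nat -> R) N : sum_n (fun k => a (k + 1)%nat) N = sum1 a (S N).
Proof.
  unfold sum_n, sum1; rewrite <- sum_n_m_S.
  apply sum_n_m_ext; intro k; rewrite Nat.add_1_r; reflexivity.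
Qed.

Definition recip_sum (x : nat -> R) (n : nat) : R := sum1 (fun i => / x i) n.

Definition odd_harmonic (n : nat) : R := recip_sum (fun k => 2 * INR k - 1) n.

Lemma harmonic_O : harmonic 0 = 0.
Proof. exact (sum1_O (fun j => / INR j)). Qed.

Lemma harmonic_S n : harmonic (S n) = harmonic n + / INR (S n).
Proof. exact (sum1_S _ n). Qed.

Lemma odd_harmonic_S n : odd_harmonic (S n) = odd_harmonic n + / (2 * INR (S n) - 1).
Proof. exact (sum1_S _ n). Qed.

Lemma harmonic_double_S n :
  harmonic (2 * S n) = harmonic (2 * n) + / (2 * INR n + 1) + / (2 * INR n + 2).
Proof.
  replace (2 * S n)%nat with (S (S (2 * n))) by lia.
  rewrite !harmonic_S, !S_INR, mult_INR; simpl (INR 2).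
  replace ((1 + 1) * INR n + 1 + 1) with (2 * INR n + 2) by ring.
  replace ((1 + 1) * INR n + 1) with (2 * INR n + 1) by ring; reflexivity.
Qed.

Lemma odd_harmonic_eq n : odd_harmonic n = harmonic (2 * n) - harmonic n / 2.
Proof.
  induction n as [|n IH].
  - unfold odd_harmonic, recip_sum; rewrite sum1_O, Nat.mul_0_r, harmonic_O; lra.
  - rewrite odd_harmonic_S, harmonic_double_S, harmonic_S, IH, S_INR.
    pose proof (pos_INR n); field; lra.
Qed.

Lemma harmonic_odd_index m : (1 <= m)%nat ->
  harmonic (2 * m - 1) = odd_harmonic m + harmonic (m - 1) / 2.
Proof.
  intros Hm; destruct m as [|k]; [lia|].
  replace (2 * S k - 1)%nat with (S (2 * k)) by lia; rewrite Nat.sub_succ, Nat.sub_0_r.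
  rewrite harmonic_S, odd_harmonic_S, odd_harmonic_eq, !S_INR, mult_INR; simpl (INR 2).
  replace (2 * (INR k + 1) - 1) with ((1 + 1) * INR k + 1) by ring; ring.
Qed.

Lemma recip_sum_double n : recip_sum (fun y => 2 * INR y) n = harmonic n / 2.
Proof.
  unfold recip_sum; rewrite (sum1_ext _ (fun y => / 2 * / INR y)).
  - rewrite sum1_scal; unfold Rdiv; rewrite Rmult_comm; reflexivity.
  - intros y Hy; apply Rinv_mult.
Qed.

Lemma harmonic_step k : 0 <= harmonic (S k) - harmonic k <= / INR (S k).
Proof.
  rewrite harmonic_S.
  pose proof (Rinv_0_lt_compat _ (lt_0_INR (S k) (Nat.lt_0_succ k))); lra.
Qed.

Lemma harmonic_ge0 n : 0 <= harmonic n.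
Proof.
  induction n as [|n IH]; [rewrite harmonic_O; lra|].
  pose proof (harmonic_step n); lra.
Qed.

Lemma odd_harmonic_step k : 0 <= odd_harmonic (S k) - odd_harmonic k <= / INR (S k).
Proof.
  rewrite odd_harmonic_S, S_INR; pose proof (pos_INR k).
  assert (0 < / (2 * (INR k + 1) - 1)) by (apply Rinv_0_lt_compat; lra).
  assert (/ (2 * (INR k + 1) - 1) <= / (INR k + 1)) by (apply Rinv_le_contravar; lra).
  lra.
Qed.

(** * Summing over a triangle by rows and by diagonals *)

Section ArithmeticKernel.

Variables x t : nat -> R.
Hypothesis x_add : forall i y, x (i + y)%nat = x i + t y.
Hypothesis x_pos : forall i, (1 <= i)%nat -> 0 < x i.
Hypothesis t_pos : forall y, (1 <= y)%nat -> 0 < t y.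

Lemma kernel_row_sum y M : (1 <= y)%nat ->
  sum1 (fun i => / (t y * x i * x (i + y)%nat)) M
  = (recip_sum x y + recip_sum x M - recip_sum x (M + y)) / t y ^ 2.
Proof.
  intros Hy; pose proof (t_pos y Hy).
  rewrite (sum1_ext _ (fun i => / t y ^ 2 * (/ x i - / x (i + y)%nat))).
  - rewrite sum1_scal, sum1_sub, (sum1_shift (fun i => / x i)).
    unfold recip_sum; field; lra.
  - intros i Hi; rewrite x_add; pose proof (x_pos i (proj1 Hi)); field; lra.
Qed.

Lemma kernel_diag_sum n :
  sum1 (fun y => / (t y * x (S n - y)%nat * x (S n))) n
  = (recip_sum t n + recip_sum x n) / x (S n) ^ 2.
Proof.
  pose proof (x_pos (S n) (le_n_S _ _ (Nat.le_0_l n))).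
  rewrite (sum1_ext _ (fun y => / x (S n) ^ 2 * (/ t y + / x (S n - y)%nat))).
  - rewrite sum1_scal, sum1_add, (sum1_reflect (fun i => / x i)).
    unfold recip_sum; field; lra.
  - intros y Hy.
    assert (Hs : x (S n) = x (S n - y)%nat + t y) by (rewrite <- x_add; f_equal; lia).
    pose proof (x_pos (S n - y) ltac:(lia)); pose proof (t_pos y (proj1 Hy)).
    rewrite Hs; field; lra.
Qed.

Lemma kernel_triangle N :
  sum1 (fun s => (recip_sum t (s - 1) + recip_sum x (s - 1)) / x s ^ 2) N
  = sum1 (fun y => (recip_sum x y - (recip_sum x N - recip_sum x (N - y))) / t y ^ 2) N.
Proof.
  pose proof (sum1_triangle (fun y i => / (t y * x i * x (i + y)%nat)) N) as Htri.
  cbv beta in Htri.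
  rewrite (sum1_ext _ (fun s => (recip_sum t (s - 1) + recip_sum x (s - 1)) / x s ^ 2))
    in Htri.
  2:{ intros [|n] Hn; [lia|]; replace (S n - 1)%nat with n by lia.
      rewrite <- kernel_diag_sum; apply sum1_ext; intros y Hy.
      replace (S n - y + y)%nat with (S n) by lia; reflexivity. }
  rewrite (sum1_ext (fun y => sum1 (fun i => / (t y * x i * x (i + y)%nat)) (N - y))
    (fun y => (recip_sum x y - (recip_sum x N - recip_sum x (N - y))) / t y ^ 2)) in Htri.
  2:{ intros y Hy; rewrite kernel_row_sum by lia.
      replace (N - y + y)%nat with N by lia; pose proof (t_pos y (proj1 Hy)); field; lra. }
  exact Htri.
Qed.

End ArithmeticKernel.

(** * Limits of harmonic and zeta partial sums *)

Lemma is_lim_seq_inv_succ : is_lim_seq (fun n => / (INR n + 1)) 0.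
Proof.
  apply (is_lim_seq_ext (fun n => / INR (S n))); [intro n; rewrite S_INR; reflexivity|].
  apply (is_lim_seq_incr_1 (fun n => / INR n)).
  exact (is_lim_seq_inv _ _ is_lim_seq_INR ltac:(discriminate)).
Qed.

Lemma is_lim_seq_ln_div : is_lim_seq (fun n => ln (INR n) / INR n) 0.
Proof. exact (filterlim_comp _ _ _ INR _ _ _ _ is_lim_seq_INR is_lim_div_ln_p). Qed.

Lemma ln_le_sub_1 x : 0 < x -> ln x <= x - 1.
Proof.
  intros Hx; rewrite <- (ln_exp (x - 1)).
  apply ln_le; [exact Hx|]; pose proof (exp_ineq1_le (x - 1)); lra.
Qed.

Lemma ln_succ_bounds y : 0 < y -> / (y + 1) <= ln (y + 1) - ln y <= / y.
Proof.
  intros Hy; split.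
  - rewrite <- Ropp_minus_distr, <- ln_div by lra.
    pose proof (ln_le_sub_1 (y / (y + 1)) ltac:(apply Rdiv_lt_0_compat; lra)) as Hln.
    replace (y / (y + 1) - 1) with (- / (y + 1)) in Hln by (field; lra); lra.
  - rewrite <- ln_div by lra.
    pose proof (ln_le_sub_1 ((y + 1) / y) ltac:(apply Rdiv_lt_0_compat; lra)) as Hln.
    replace ((y + 1) / y - 1) with (/ y) in Hln by (field; lra); lra.
Qed.

Lemma harmonic_sub_le_ln m k : (1 <= m)%nat ->
  harmonic (m + k) - harmonic m <= ln (INR (m + k)) - ln (INR m).
Proof.
  intros Hm; induction k as [|k IH]; [rewrite Nat.add_0_r; lra|].
  rewrite Nat.add_succ_r, harmonic_S, S_INR.
  assert (Hpos : 0 < INR (m + k)) by (apply lt_0_INR; lia).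
  pose proof (ln_succ_bounds _ Hpos); lra.
Qed.

Lemma harmonic_sub_ge_ln m k :
  ln (INR (m + k) + 1) - ln (INR m + 1) <= harmonic (m + k) - harmonic m.
Proof.
  induction k as [|k IH]; [rewrite Nat.add_0_r; lra|].
  rewrite Nat.add_succ_r, harmonic_S, S_INR.
  assert (Hpos : 0 < INR (m + k) + 1) by (pose proof (pos_INR (m + k)); lra).
  pose proof (ln_succ_bounds _ Hpos); lra.
Qed.

Lemma harmonic_double_sub_le_ln2 n : (1 <= n)%nat -> harmonic (2 * n) - harmonic n <= ln 2.
Proof.
  intros Hn; pose proof (harmonic_sub_le_ln n n Hn) as Hle.
  assert (Hpos : 0 < INR n) by (apply lt_0_INR; lia).
  replace (n + n)%nat with (2 * n)%nat in Hle by lia.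
  replace (INR (2 * n)) with (2 * INR n) in Hle by (rewrite mult_INR; simpl; ring).
  rewrite ln_mult in Hle by lra; lra.
Qed.

Lemma is_lim_harmonic_double_sub : is_lim_seq (fun n => harmonic (2 * n) - harmonic n) (ln 2).
Proof.
  apply is_lim_seq_incr_1.
  apply (is_lim_seq_le_le (fun n => ln 2 - / (INR n + 1)) _ (fun _ => ln 2)).
  - intros n; split; [|apply harmonic_double_sub_le_ln2; lia].
    pose proof (harmonic_sub_ge_ln (S n) (S n)) as Hge.
    replace (S n + S n)%nat with (2 * S n)%nat in Hge by lia.
    replace (INR (2 * S n)) with (2 * (INR n + 1)) in Hge
      by (rewrite mult_INR, (S_INR n); simpl (INR 2); ring).
    rewrite S_INR in Hge; pose proof (pos_INR n).
    pose proof (ln_succ_bounds (2 * (INR n + 1) + 1) ltac:(lra)) as [_ Hup].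
    replace (2 * (INR n + 1) + 1 + 1) with (2 * (INR n + 1 + 1)) in Hup by ring.
    rewrite ln_mult in Hup by lra.
    assert (/ (2 * (INR n + 1) + 1) <= / (INR n + 1)) by (apply Rinv_le_contravar; lra).
    lra.
  - replace (Finite (ln 2)) with (Finite (ln 2 - 0)) by (f_equal; ring).
    apply is_lim_seq_minus'; [apply is_lim_seq_const|exact is_lim_seq_inv_succ].
  - apply is_lim_seq_const.
Qed.

Lemma is_lim_harmonic_div : is_lim_seq (fun n => harmonic n / (INR n + 1)) 0.
Proof.
  apply (is_lim_seq_le_le_loc (fun _ => 0) _ (fun n => / (INR n + 1) + ln (INR n) / INR n)).
  - exists 1%nat; intros n Hn.
    assert (Hpos : 1 <= INR n) by (apply (le_INR 1); exact Hn).
    pose proof (harmonic_sub_le_ln 1 (n - 1) (le_n 1)) as Hle.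
    replace (1 + (n - 1))%nat with n in Hle by lia.
    change (harmonic 1) with (harmonic (S 0)) in Hle.
    rewrite harmonic_S, harmonic_O in Hle; simpl (INR 1) in Hle.
    rewrite ln_1, Rinv_1 in Hle.
    assert (Hln : 0 <= ln (INR n)) by (rewrite <- ln_1; apply ln_le; lra).
    assert (ln (INR n) / (INR n + 1) <= ln (INR n) / INR n)
      by (apply Rmult_le_compat_l; [lra|apply Rinv_le_contravar; lra]).
    split; [apply Rdiv_le_0_compat; [apply harmonic_ge0|lra]|].
    apply (Rle_trans _ ((1 + ln (INR n)) / (INR n + 1))).
    + apply Rmult_le_compat_r; [apply Rlt_le, Rinv_0_lt_compat|]; lra.
    + unfold Rdiv at 1; rewrite Rmult_plus_distr_r; lra.
  - apply is_lim_seq_const.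
  - replace (Finite 0) with (Finite (0 + 0)) by (f_equal; ring).
    exact (is_lim_seq_plus' _ _ _ _ is_lim_seq_inv_succ is_lim_seq_ln_div).
Qed.

Lemma is_lim_harmonic_double_div : is_lim_seq (fun n => harmonic (2 * n) / (INR n + 1)) 0.
Proof.
  apply (is_lim_seq_le_le_loc (fun _ => 0) _
    (fun n => harmonic n / (INR n + 1) + ln 2 * / (INR n + 1))).
  - exists 1%nat; intros n Hn.
    pose proof (harmonic_double_sub_le_ln2 n Hn); pose proof (pos_INR n).
    split; [apply Rdiv_le_0_compat; [apply harmonic_ge0|lra]|].
    unfold Rdiv; rewrite <- Rmult_plus_distr_r.
    apply Rmult_le_compat_r; [apply Rlt_le, Rinv_0_lt_compat|]; lra.
  - apply is_lim_seq_const.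
  - replace (Finite 0) with (Finite (0 + ln 2 * 0)) by (f_equal; ring).
    apply is_lim_seq_plus'; [exact is_lim_harmonic_div|].
    exact (is_lim_seq_scal_l _ (ln 2) 0 is_lim_seq_inv_succ).
Qed.

Definition zeta_partial (s n : nat) : R := sum1 (fun k => / INR k ^ s) n.

Lemma zeta_partial_S s n : zeta_partial s (S n) = zeta_partial s n + / INR (S n) ^ s.
Proof. exact (sum1_S _ n). Qed.

Lemma zeta_partial_le s n : (2 <= s)%nat -> zeta_partial s (S n) <= 2 - / INR (S n).
Proof.
  intros Hs; induction n as [|n IH].
  - unfold zeta_partial; rewrite sum1_S, sum1_O, pow1; simpl; lra.
  - rewrite zeta_partial_S, (S_INR (S n)).
    assert (Hn : 1 <= INR (S n)) by (apply (le_INR 1); lia).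
    assert (/ (INR (S n) + 1) ^ s <= / INR (S n) - / (INR (S n) + 1)).
    { replace (/ INR (S n) - / (INR (S n) + 1)) with (/ (INR (S n) * (INR (S n) + 1)))
        by (field; lra).
      apply Rinv_le_contravar; [nra|].
      apply (Rle_trans _ ((INR (S n) + 1) ^ 2)); [nra|apply Rle_pow; [lra|exact Hs]]. }
    lra.
Qed.

Lemma is_lim_zeta_partial s : (2 <= s)%nat -> is_lim_seq (zeta_partial s) (zeta s).
Proof.
  intros Hs.
  assert (Hsum : forall N, sum_n (fun k => / INR (k + 1) ^ s) N = zeta_partial s (S N))
    by (intro N; exact (sum_n_succ (fun k => / INR k ^ s) N)).
  assert (Hex : ex_series (fun k => / INR (k + 1) ^ s)).
  { apply (ex_finite_lim_seq_incr _ 2); intro n; rewrite !Hsum.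
    - rewrite (zeta_partial_S s (S n)).
      pose proof (Rinv_0_lt_compat _ (pow_lt _ s (lt_0_INR (S (S n)) (Nat.lt_0_succ _)))).
      lra.
    - pose proof (zeta_partial_le s n Hs).
      pose proof (Rinv_0_lt_compat _ (lt_0_INR (S n) (Nat.lt_0_succ _))); lra. }
  apply is_lim_seq_incr_1, (is_lim_seq_ext _ _ _ Hsum), (Series_correct _ Hex).
Qed.

Lemma zeta2_partial_tail_bounds n M : (1 <= n)%nat ->
  / (INR n + 1) - / (INR (M + n) + 1) <= zeta_partial 2 (M + n) - zeta_partial 2 n
  <= / INR n - / INR (M + n).
Proof.
  intros Hn; induction M as [|M IH]; [simpl; lra|].
  rewrite Nat.add_succ_l, zeta_partial_S, S_INR.
  assert (Hk : 1 <= INR (M + n)) by (apply (le_INR 1); lia).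
  assert (/ (INR (M + n) + 1) - / (INR (M + n) + 1 + 1) <= / (INR (M + n) + 1) ^ 2).
  { replace (/ (INR (M + n) + 1) - / (INR (M + n) + 1 + 1))
      with (/ ((INR (M + n) + 1) * (INR (M + n) + 1 + 1))) by (field; lra).
    apply Rinv_le_contravar; nra. }
  assert (/ (INR (M + n) + 1) ^ 2 <= / INR (M + n) - / (INR (M + n) + 1)).
  { replace (/ INR (M + n) - / (INR (M + n) + 1))
      with (/ (INR (M + n) * (INR (M + n) + 1))) by (field; lra).
    apply Rinv_le_contravar; nra. }
  lra.
Qed.

Lemma zeta2_tail_bounds n : (1 <= n)%nat ->
  / (INR n + 1) <= zeta 2 - zeta_partial 2 n <= / INR n.
Proof.
  intros Hn.
  assert (Hinv : is_lim_seq (fun M => / INR (M + n)) 0).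
  { apply (is_lim_seq_incr_n (fun m => / INR m) n).
    exact (is_lim_seq_inv _ _ is_lim_seq_INR ltac:(discriminate)). }
  assert (Hinv1 : is_lim_seq (fun M => / (INR (M + n) + 1)) 0)
    by exact (proj1 (is_lim_seq_incr_n (fun m => / (INR m + 1)) n 0) is_lim_seq_inv_succ).
  assert (Htail : is_lim_seq (fun M => zeta_partial 2 (M + n) - zeta_partial 2 n)
                    (zeta 2 - zeta_partial 2 n)).
  { apply is_lim_seq_minus'; [|apply is_lim_seq_const].
    apply (is_lim_seq_incr_n (zeta_partial 2) n), is_lim_zeta_partial; lia. }
  assert (Hlo := is_lim_seq_le _ _ _ _ (fun M => proj1 (zeta2_partial_tail_bounds n M Hn))
    (is_lim_seq_minus' _ _ _ _ (is_lim_seq_const (/ (INR n + 1))) Hinv1) Htail).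
  assert (Hup := is_lim_seq_le _ _ _ _ (fun M => proj2 (zeta2_partial_tail_bounds n M Hn))
    Htail (is_lim_seq_minus' _ _ _ _ (is_lim_seq_const (/ INR n)) Hinv)).
  simpl in Hlo, Hup; lra.
Qed.

(** * Euler sums *)

Lemma harmonic_diag_sum n :
  sum1 (fun a => / (INR a * INR (S n - a) * INR (S n))) n = 2 * harmonic n / INR (S n) ^ 2.
Proof.
  rewrite (kernel_diag_sum INR INR plus_INR lt_0_INR lt_0_INR).
  change (recip_sum INR n) with (harmonic n); field.
  apply not_0_INR; discriminate.
Qed.

Definition lag_sum (g : nat -> R) (N : nat) : R :=
  sum1 (fun a => (g N - g (N - a)%nat) / INR a ^ 2) N.

Section LagSum.

Variable g : nat -> R.
Hypothesis g_step : forall k, 0 <= g (S k) - g k <= / INR (S k).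

Lemma lag_increment_bounds m k : 0 <= g (m + k)%nat - g m <= INR k / (INR m + 1).
Proof.
  induction k as [|k IH]; [rewrite Nat.add_0_r; unfold Rdiv; simpl; lra|].
  rewrite Nat.add_succ_r, S_INR; pose proof (g_step (m + k)).
  pose proof (pos_INR m); pose proof (pos_INR k).
  assert (/ INR (S (m + k)) <= / (INR m + 1)).
  { apply Rinv_le_contravar; [lra|]; rewrite S_INR, plus_INR; lra. }
  replace ((INR k + 1) / (INR m + 1)) with (INR k / (INR m + 1) + / (INR m + 1))
    by (field; lra).
  lra.
Qed.

Lemma lag_sum_bounds N : 0 <= lag_sum g N <= 2 * (harmonic N / (INR N + 1)).
Proof.
  assert (HN : 0 < INR (S N)) by apply lt_0_INR, Nat.lt_0_succ.
  assert (Hterm : forall a, (1 <= a <= N)%nat ->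
    0 <= g N - g (N - a)%nat <= INR a / INR (S N - a)).
  { intros a Ha; pose proof (lag_increment_bounds (N - a) a) as Hb.
    replace (N - a + a)%nat with N in Hb by lia.
    replace (S N - a)%nat with (S (N - a)) by lia; rewrite S_INR; exact Hb. }
  split.
  - replace 0 with (sum1 (fun _ => 0) N) by exact (sum_n_m_const_zero 1 N).
    apply sum1_le; intros a Ha.
    apply Rdiv_le_0_compat; [apply Hterm, Ha|apply pow_lt, lt_0_INR; lia].
  - replace (2 * (harmonic N / (INR N + 1)))
      with (INR (S N) * (2 * harmonic N / INR (S N) ^ 2)) by (rewrite S_INR in *; field; lra).
    rewrite <- harmonic_diag_sum, <- sum1_scal.
    apply sum1_le; intros a Ha.
    assert (Ha0 : 0 < INR a) by (apply lt_0_INR; lia).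
    assert (Hb0 : 0 < INR (S N - a)) by (apply lt_0_INR; lia).
    replace (INR (S N) * / (INR a * INR (S N - a) * INR (S N)))
      with (INR a / INR (S N - a) / INR a ^ 2) by (field; lra).
    apply Rmult_le_compat_r; [apply Rlt_le, Rinv_0_lt_compat, pow_lt, Ha0|apply Hterm, Ha].
Qed.

Lemma is_lim_lag_sum : is_lim_seq (lag_sum g) 0.
Proof.
  apply (is_lim_seq_le_le (fun _ => 0) _ (fun N => 2 * (harmonic N / (INR N + 1)))).
  - exact lag_sum_bounds.
  - apply is_lim_seq_const.
  - replace (Finite 0) with (Rbar_mult 2 0) by (simpl; f_equal; ring).
    exact (is_lim_seq_scal_l _ 2 0 is_lim_harmonic_div).
Qed.

End LagSum.

Definition euler_partial (N : nat) : R := sum1 (fun s => harmonic (s - 1) / INR s ^ 2) N.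

Definition odd_euler_partial (N : nat) : R := sum1 (fun y => odd_harmonic y / INR y ^ 2) N.

Lemma euler_partial_eq N : euler_partial N = zeta_partial 3 N - lag_sum harmonic N.
Proof.
  assert (Htri : sum1 (fun s => (harmonic (s - 1) + harmonic (s - 1)) / INR s ^ 2) N
                 = sum1 (fun y => (harmonic y - (harmonic N - harmonic (N - y))) / INR y ^ 2) N)
    by exact (kernel_triangle INR INR plus_INR lt_0_INR lt_0_INR N).
  rewrite (sum1_ext _ (fun s => 2 * (harmonic (s - 1) / INR s ^ 2))) in Htri.
  2:{ intros; unfold Rdiv; ring. }
  rewrite (sum1_ext (fun y => (harmonic y - (harmonic N - harmonic (N - y))) / INR y ^ 2)
    (fun y => harmonic y / INR y ^ 2 - (harmonic N - harmonic (N - y)) / INR y ^ 2)) in Htri.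
  2:{ intros; unfold Rdiv; ring. }
  assert (Hsplit : sum1 (fun y => harmonic y / INR y ^ 2) N = euler_partial N + zeta_partial 3 N).
  { unfold euler_partial, zeta_partial; rewrite <- sum1_add.
    apply sum1_ext; intros [|y] Hy; [lia|].
    rewrite harmonic_S, Nat.sub_succ, Nat.sub_0_r.
    pose proof (lt_0_INR (S y) (Nat.lt_0_succ y)); field; lra. }
  rewrite sum1_scal, sum1_sub, Hsplit in Htri; fold (euler_partial N) (lag_sum harmonic N) in Htri.
  lra.
Qed.

Lemma euler_partial_odd_terms N :
  sum1 (fun m => harmonic (2 * m - 1 - 1) / INR (2 * m - 1) ^ 2) N
  = (odd_euler_partial N - lag_sum odd_harmonic N) / 4.
Proof.
  assert (Htri : sum1 (fun s => (recip_sum (fun y => 2 * INR y) (s - 1) + odd_harmonic (s - 1))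
                                / (2 * INR s - 1) ^ 2) N
    = sum1 (fun y => (odd_harmonic y - (odd_harmonic N - odd_harmonic (N - y)))
                     / (2 * INR y) ^ 2) N).
  { apply (kernel_triangle (fun i => 2 * INR i - 1) (fun y => 2 * INR y)).
    - intros i y; rewrite plus_INR; ring.
    - intros i Hi; apply (le_INR 1) in Hi; simpl in Hi; lra.
    - intros y Hy; apply lt_0_INR in Hy; lra. }
  rewrite (sum1_ext _ (fun m => harmonic (2 * m - 1 - 1) / INR (2 * m - 1) ^ 2)) in Htri.
  2:{ intros m Hm; rewrite recip_sum_double.
      replace (2 * m - 1 - 1)%nat with (2 * (m - 1))%nat by lia.
      rewrite odd_harmonic_eq, minus_INR, mult_INR by lia; simpl (INR 2); simpl (INR 1).
      replace ((1 + 1) * INR m - 1) with (2 * INR m - 1) by ring; unfold Rdiv; ring. }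
  rewrite Htri, (sum1_ext _ (fun y => / 4 * (odd_harmonic y / INR y ^ 2
                     - (odd_harmonic N - odd_harmonic (N - y)) / INR y ^ 2))).
  - rewrite sum1_scal, sum1_sub; unfold odd_euler_partial, lag_sum, Rdiv; ring.
  - intros y Hy; pose proof (lt_0_INR y ltac:(lia)); field; lra.
Qed.

Lemma euler_partial_even_terms N :
  sum1 (fun m => harmonic (2 * m - 1) / INR (2 * m) ^ 2) N
  = odd_euler_partial N / 4 + euler_partial N / 8.
Proof.
  rewrite (sum1_ext _ (fun m => / 4 * (odd_harmonic m / INR m ^ 2)
                                + / 8 * (harmonic (m - 1) / INR m ^ 2))).
  - rewrite sum1_add, !sum1_scal; unfold odd_euler_partial, euler_partial, Rdiv; ring.
  - intros m Hm; rewrite harmonic_odd_index, mult_INR by lia.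
    pose proof (lt_0_INR m ltac:(lia)); simpl (INR 2); field; lra.
Qed.

Lemma odd_euler_partial_eq N :
  odd_euler_partial N
  = 2 * euler_partial (2 * N) - euler_partial N / 4 + lag_sum odd_harmonic N / 2.
Proof.
  unfold euler_partial at 1.
  rewrite sum1_double, euler_partial_odd_terms, euler_partial_even_terms; lra.
Qed.

Lemma is_lim_euler_partial : is_lim_seq euler_partial (zeta 3).
Proof.
  apply (is_lim_seq_ext (fun N => zeta_partial 3 N - lag_sum harmonic N)).
  { intro N; symmetry; apply euler_partial_eq. }
  replace (Finite (zeta 3)) with (Finite (zeta 3 - 0)) by (f_equal; ring).
  apply is_lim_seq_minus'; [apply is_lim_zeta_partial; lia|].
  exact (is_lim_lag_sum harmonic harmonic_step).
Qed.

Lemma is_lim_odd_euler_partial : is_lim_seq odd_euler_partial (7 / 4 * zeta 3).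
Proof.
  apply (is_lim_seq_ext
    (fun N => 2 * euler_partial (2 * N) - euler_partial N / 4 + lag_sum odd_harmonic N / 2)).
  { intro N; symmetry; apply odd_euler_partial_eq. }
  replace (Finite (7 / 4 * zeta 3)) with (Finite (2 * zeta 3 - zeta 3 / 4 + 0 / 2))
    by (f_equal; field).
  apply is_lim_seq_plus'; [apply is_lim_seq_minus'|].
  - apply (is_lim_seq_scal_l _ 2 (zeta 3)).
    apply (is_lim_seq_subseq euler_partial); [apply eventually_subseq; intro; lia|].
    exact is_lim_euler_partial.
  - apply is_lim_seq_div'; [exact is_lim_euler_partial|apply is_lim_seq_const|lra].
  - apply is_lim_seq_div'; [|apply is_lim_seq_const|lra].
    exact (is_lim_lag_sum odd_harmonic odd_harmonic_step).
Qed.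

(** * Summation by parts *)

Definition zeta2_remainder (n : nat) : R := zeta 2 - zeta_partial 2 n - / INR n.

Lemma zeta2_remainder_bounds n : (1 <= n)%nat ->
  - / (INR n * (INR n + 1)) <= zeta2_remainder n <= 0.
Proof.
  intros Hn; pose proof (zeta2_tail_bounds n Hn).
  assert (Hpos : 0 < INR n) by (apply lt_0_INR; exact Hn).
  replace (- / (INR n * (INR n + 1))) with (/ (INR n + 1) - / INR n) by (field; lra).
  unfold zeta2_remainder; lra.
Qed.

Lemma zeta2_remainder_step n : (1 <= n)%nat ->
  zeta2_remainder (S n) - zeta2_remainder n = / (INR n * (INR n + 1) ^ 2).
Proof.
  intros Hn; assert (Hpos : 0 < INR n) by (apply lt_0_INR; exact Hn).
  unfold zeta2_remainder; rewrite zeta_partial_S, S_INR; field; lra.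
Qed.

Definition even_harmonic_sum (n : nat) : R := sum1 (fun k => harmonic (2 * k)) n.

Lemma even_harmonic_sum_S n :
  even_harmonic_sum (S n) = even_harmonic_sum n + harmonic (2 * S n).
Proof. exact (sum1_S _ n). Qed.

Lemma even_harmonic_sum_eq n :
  even_harmonic_sum n = ((2 * INR n + 1) * harmonic (2 * n) - 2 * INR n + harmonic n / 2) / 2.
Proof.
  induction n as [|n IH].
  - unfold even_harmonic_sum; rewrite sum1_O, Nat.mul_0_r, harmonic_O; simpl; field.
  - rewrite even_harmonic_sum_S, IH, harmonic_double_S, harmonic_S, S_INR.
    pose proof (pos_INR n); field; lra.
Qed.

Lemma even_harmonic_sum_bounds n : 0 <= even_harmonic_sum n <= INR n * harmonic (2 * n).
Proof.
  induction n as [|n IH]; [unfold even_harmonic_sum; rewrite sum1_O; simpl; lra|].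
  rewrite even_harmonic_sum_S, S_INR.
  assert (harmonic (2 * n) <= harmonic (2 * S n)).
  { rewrite harmonic_double_S; pose proof (pos_INR n).
    assert (0 < / (2 * INR n + 1)) by (apply Rinv_0_lt_compat; lra).
    assert (0 < / (2 * INR n + 2)) by (apply Rinv_0_lt_compat; lra); lra. }
  pose proof (harmonic_ge0 (2 * n)); pose proof (pos_INR n); nra.
Qed.

Lemma is_lim_even_harmonic_sum_remainder :
  is_lim_seq (fun N => even_harmonic_sum (S N) * zeta2_remainder (S N)) 0.
Proof.
  apply (is_lim_seq_le_le (fun N => - (harmonic (2 * S N) / (INR (S N) + 1))) _ (fun _ => 0)).
  - intro N; set (n := S N).
    assert (Hn : 1 <= INR n) by (apply (le_INR 1); unfold n; lia).
    pose proof (even_harmonic_sum_bounds n) as [E0 E1].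
    pose proof (zeta2_remainder_bounds n ltac:(unfold n; lia)) as [R0 R1].
    assert (Hprod : even_harmonic_sum n * / (INR n * (INR n + 1))
                    <= harmonic (2 * n) / (INR n + 1)).
    { replace (harmonic (2 * n) / (INR n + 1))
        with (INR n * harmonic (2 * n) * / (INR n * (INR n + 1))) by (field; lra).
      apply Rmult_le_compat_r; [apply Rlt_le, Rinv_0_lt_compat; nra|exact E1]. }
    split; [|nra].
    assert (even_harmonic_sum n * zeta2_remainder n
            >= - (even_harmonic_sum n * / (INR n * (INR n + 1)))) by nra.
    lra.
  - replace (Finite 0) with (Finite (- 0)) by (f_equal; ring).
    apply (is_lim_seq_opp (fun N => harmonic (2 * S N) / (INR (S N) + 1)) 0).
    exact (proj1 (is_lim_seq_incr_1 (fun n => harmonic (2 * n) / (INR n + 1)) 0)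
             is_lim_harmonic_double_div).
  - apply is_lim_seq_const.
Qed.

Definition abel_sum (N : nat) : R :=
  sum1 (fun k => even_harmonic_sum k / (INR k * (INR k + 1) ^ 2)) N.

Lemma partial_sum_by_parts N :
  sum1 (fun k => harmonic (2 * k) * zeta2_remainder k) (S N)
  = even_harmonic_sum (S N) * zeta2_remainder (S N) - abel_sum N.
Proof.
  rewrite sum1_by_parts; fold (even_harmonic_sum (S N)); f_equal.
  apply sum1_ext; intros k Hk; rewrite zeta2_remainder_step by lia; reflexivity.
Qed.

(* The partial fractions 1/(k (k+1)^2) = 1/k - 1/(k+1) - 1/(k+1)^2 make the terms of
   [abel_sum] telescope against the closed form of [even_harmonic_sum]. *)
Lemma abel_sum_eq N :
  2 * abel_sum N
  = odd_euler_partial (S N) + 2 * (harmonic (2 * N) - harmonic N)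
    - 4 * (harmonic (2 * S N) - harmonic (S N)) + 2 - / (INR N + 1) ^ 2
    - harmonic (2 * N) / (INR N + 1) - harmonic N / (INR N + 1) / 2.
Proof.
  induction N as [|N IH].
  - unfold abel_sum, odd_euler_partial; rewrite sum1_O, sum1_S, sum1_O.
    rewrite odd_harmonic_eq, !harmonic_double_S, harmonic_S, !Nat.mul_0_r, harmonic_O.
    simpl; field.
  - unfold abel_sum; rewrite sum1_S; fold (abel_sum N).
    unfold odd_euler_partial; rewrite (sum1_S _ (S N)); fold (odd_euler_partial (S N)).
    rewrite Rmult_plus_distr_l, IH, even_harmonic_sum_eq, odd_harmonic_eq.
    rewrite !harmonic_double_S, !harmonic_S, !S_INR.
    pose proof (pos_INR N); field; lra.
Qed.

Lemma is_lim_abel_sum : is_lim_seq abel_sum (1 + 7 / 8 * zeta 3 - ln 2).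
Proof.
  assert (Hinv2 : is_lim_seq (fun N => / (INR N + 1) ^ 2) (0 * 0)).
  { apply (is_lim_seq_ext (fun N => / (INR N + 1) * / (INR N + 1))).
    { intro N; pose proof (pos_INR N); field; lra. }
    apply is_lim_seq_mult'; exact is_lim_seq_inv_succ. }
  assert (Hlim : is_lim_seq (fun N => 2 * abel_sum N)
    (7 / 4 * zeta 3 + 2 * ln 2 - 4 * ln 2 + 2 - 0 * 0 - 0 - 0 / 2)).
  { apply (is_lim_seq_ext _ _ _ (fun N => eq_sym (abel_sum_eq N))).
    apply is_lim_seq_minus';
      [|apply is_lim_seq_div'; [exact is_lim_harmonic_div|apply is_lim_seq_const|lra]].
    apply is_lim_seq_minus'; [|exact is_lim_harmonic_double_div].
    apply is_lim_seq_minus'; [|exact Hinv2].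
    apply is_lim_seq_plus'; [|apply is_lim_seq_const].
    apply is_lim_seq_minus'.
    - apply is_lim_seq_plus'; [|exact (is_lim_seq_scal_l _ 2 _ is_lim_harmonic_double_sub)].
      exact (proj1 (is_lim_seq_incr_1 odd_euler_partial _) is_lim_odd_euler_partial).
    - apply (is_lim_seq_scal_l _ 4 (ln 2)).
      exact (proj1 (is_lim_seq_incr_1 (fun n => harmonic (2 * n) - harmonic n) _)
               is_lim_harmonic_double_sub). }
  apply (is_lim_seq_ext (fun N => 2 * abel_sum N / 2)); [intro N; field|].
  replace (1 + 7 / 8 * zeta 3 - ln 2)
    with ((7 / 4 * zeta 3 + 2 * ln 2 - 4 * ln 2 + 2 - 0 * 0 - 0 - 0 / 2) / 2) by field.
  apply is_lim_seq_div'; [exact Hlim|apply is_lim_seq_const|lra].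
Qed.

Theorem mainTheorem1 :
  is_series
    (fun k : nat =>
       harmonic (2 * (k + 1)) * (zeta 2 - psum2 (k + 1) - / INR (k + 1)))
    (ln 2 - 7 / 8 * zeta 3 - 1).
Proof.
  assert (Hlim : is_lim_seq
    (fun N => even_harmonic_sum (S N) * zeta2_remainder (S N) - abel_sum N)
    (0 - (1 + 7 / 8 * zeta 3 - ln 2))).
  { apply is_lim_seq_minus'; [exact is_lim_even_harmonic_sum_remainder|exact is_lim_abel_sum]. }
  replace (ln 2 - 7 / 8 * zeta 3 - 1) with (0 - (1 + 7 / 8 * zeta 3 - ln 2)) by ring.
  refine (is_lim_seq_ext _ _ _ _ Hlim); intro N.
  rewrite <- partial_sum_by_parts.
  exact (eq_sym (sum_n_succ (fun k => harmonic (2 * k) * zeta2_remainder k) N)).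
Qed.
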